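(* Let $\lambda$ be a polynomial $\mathfrak{gl}_{m|n}$ weight, $a\in\{0,1,\dots,m\}$, $b\in\{0,1,\dots,n\}$, and \[\boldsymbol A=(\lambda_m+\lambda_{m+1}<\lambda_{m-1}+\lambda_{m+1}+1<\dots<\lambda_{m-a+1}+\lambda_{m+1}+a-1),\] \[\boldsymbol B=(0<\lambda_{m+1}-\lambda_{m+2}+1<\dots<\lambda_{m+1}-\lambda_{m+b}+b-1)\] (i.e. $\boldsymbol A=\{\lambda_{m-k+1}+\lambda_{m+1}+k-1\}_{k=1}^a$, $\boldsymbol B=\{\lambda_{m+1}-\lambda_{m+k}+k-1\}_{k=1}^b$). Then the dominant of the partition $\boldsymbol A\sqcup\boldsymbol B$ is: (1) if $b\le\lambda_m$: $(0<\lambda_{m+1}-\lambda_{m+2}+1<\dots<\lambda_{m+1}-\lambda_{m+b}+b-1<\lambda_m+\lambda_{m+1}<\dots<\lambda_{m-a+1}+\lambda_{m+1}+a-1)$; (2) if $\lambda_{m-j+1}<b\le\lambda_{m-j}$ for some $1\le j\le a-1$: $(0<\lambda_{m+1}-\lambda_{m+2}+1<\dots<\lambda_{m+1}-\lambda_{m+b}+b-1<\lambda_{m+1}+b<\lambda_{m+1}+b+1<\dots<\lambda_{m+1}+b+j-1<\lambda_{m-j}+\lambda_{m+1}+j<\dots<\lambda_{m-a+1}+\lambda_{m+1}+a-1)$; (3) if $\lambda_{m-a+1}<b$: $(0<\lambda_{m+1}-\lambda_{m+2}+1<\dots<\lambda_{m+1}-\lambda_{m+b}+b-1<\lambda_{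m+1}+b<\lambda_{m+1}+b+1<\dots<\lambda_{m+1}+b+a-1)$.
   Context: A polynomial $\mathfrak{gl}_{m|n}$ weight is $\lambda=(\lambda_1,\dots,\lambda_{m+n})\in\mathbb{Z}^{m+n}_{\ge0}$ with $\lambda_1\ge\dots\ge\lambda_m$, $\lambda_{m+1}\ge\dots\ge\lambda_{m+n}$, and $\lambda_{m+k}=0$ whenever $k>\lambda_m$. A partition with $r$ parts is a weakly increasing sequence $\boldsymbol a=(a_1\le\dots\le a_r)$ of nonnegative integers; a finite multiset of nonnegative integers is identified with the partition obtained by sorting it, and $\sqcup$ denotes multiset union. $\boldsymbol b$ dominates $\boldsymbol a$ (both with $r$ parts) if $b_i\ge a_i$ for all $i$. The dominant $\bar{\boldsymbol a}$ of $\boldsymbol a$ is the unique partition with $r$ distinct parts which dominates $\boldsymbol a$ and is dominated by every partition with $r$ distinct parts dominating $\boldsymbol a$. *)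

From mathcomp Require Import all_boot.
Set Implicit Arguments. Unset Strict Implicit. Unset Printing Implicit Defensive.

(* A gl_{m|n} weight is a function lam : nat -> nat, used at indices 1..m+n
   (lam i = lambda_i); values outside 1..m+n are irrelevant. *)
Definition polynomial_weight (m n : nat) (lam : nat -> nat) : Prop :=
  [/\ (forall i, 1 <= i -> i < m -> lam i.+1 <= lam i),
      (forall i, m + 1 <= i -> i < m + n -> lam i.+1 <= lam i) &
      (forall k, 1 <= k <= n -> lam m < k -> lam (m + k) = 0)].

Definition partition (s : seq nat) : bool := sorted leq s.
Definition distinct_partition (s : seq nat) : bool := sorted ltn s.

Definition munion (s t : seq nat) : seq nat := sort leq (s ++ t).

Definition dominates (b a : seq nat) : Prop :=
  size b = size a /\ forall i, i < size a -> nth 0 a i <= nth 0 b i.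

Definition is_dominant (a d : seq nat) : Prop :=
  [/\ distinct_partition d, dominates d a &
      forall c, distinct_partition c -> dominates c a -> dominates c d].

Definition seqA (m : nat) (lam : nat -> nat) (a : nat) : seq nat :=
  [seq lam (m - k + 1) + lam (m + 1) + (k - 1) | k <- iota 1 a].
Definition seqB (m : nat) (lam : nat -> nat) (b : nat) : seq nat :=
  [seq (lam (m + 1) - lam (m + k)) + (k - 1) | k <- iota 1 b].

From mathcomp Require Import all_boot zify.

(* The dominant of a partition s is built greedily: d_0 = s_0 and
   d_i = max (s_i, d_(i-1) + 1).  Hence a strictly increasing d dominating s
   is its dominant as soon as each part d_i equals s_i or d_(i-1) + 1.  The
   i-th part of the sorted union A ⊔ B is compared with a bound v by counting
   the parts of A and of B below v.  Both sequences increase strictly, and the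
   monotonicity of λ gives B_k <= λ_(m+1) + k - 1 with equality once k > λ_m,
   A_k >= λ_m + λ_(m+1), and A_k < λ_(m+1) + b + k - 1 exactly when k <= j.
   So the dominant is B, then the run λ_(m+1) + b, ..., λ_(m+1) + b + j - 1,
   then the A_k with k > j; the three cases of the theorem are j = 0,
   0 < j < a and j = a. *)

Lemma leq_incr_shift (f : nat -> nat) lo hi x y :
  (forall i, lo <= i < hi -> f i < f i.+1) -> lo <= x <= y -> y <= hi ->
  f x + (y - x) <= f y.
Proof.
move=> f_incr /andP[lo_x]; elim: y => [|y IH] x_le_y y_le_hi.
  by move: x_le_y; rewrite leqn0 => /eqP ->; rewrite addn0.
have [x_lt|->] : x < y.+1 \/ x = y.+1 by lia.
  have := IH x_lt (ltnW y_le_hi); have := f_incr y; lia.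
by rewrite subnn addn0.
Qed.

Lemma count_map_iota_lb (f : nat -> nat) (P : pred nat) n r :
  r <= n -> (forall k, 0 < k <= r -> P (f k)) ->
  r <= count P [seq f k | k <- iota 1 n].
Proof.
move=> le_rn Pf; rewrite count_map -(subnKC le_rn) iotaD count_cat.
rewrite (@eq_in_count _ _ predT (iota 1 r)) ?count_predT ?size_iota ?leq_addr //.
by move=> k; rewrite mem_iota => k_in; apply: Pf; lia.
Qed.

Lemma count_map_iota_ub (f : nat -> nat) (P : pred nat) n r :
  (forall k, r < k <= n -> ~~ P (f k)) ->
  count P [seq f k | k <- iota 1 n] <= r.
Proof.
move=> notPf; rewrite count_map; case: (leqP r n) => [le_rn|lt_nr]; last first.
  by rewrite (leq_trans (count_size _ _)) // size_iota ltnW.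
rewrite -(subnKC le_rn) iotaD count_cat.
rewrite (@eq_in_count _ _ pred0 (iota _ (n - r))) ?count_pred0 ?addn0.
  by rewrite (leq_trans (count_size _ _)) // size_iota.
by move=> k; rewrite mem_iota => k_in /=; apply/negbTE/notPf; lia.
Qed.

Lemma sorted_nth_count (P : pred nat) (s : seq nat) i :
  (forall x y, x <= y -> P y -> P x) -> sorted leq s -> i < size s ->
  P (nth 0 s i) = (i < count P s).
Proof.
move=> P_down; elim: s i => [|x s IH] i //= s_sorted lt_i.
have x_le : all (leq x) s by move: s_sorted; rewrite (path_sortedE leq_trans) => /andP[].
have count0 : ~~ P x -> count P s = 0.
  move=> notPx; apply/eqP; rewrite -leqn0 leqNgt -has_count; apply/hasPn => y y_in.
  by apply: contra notPx; apply: P_down; exact: (allP x_le).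
case: i lt_i => [|i] lt_i /=.
  by case: (boolP (P x)) => [|/count0 ->].
rewrite IH ?(path_sorted s_sorted) //.
case: (boolP (P x)) => [|/count0 ->] //=.
Qed.

Lemma nth_munion_leq (X Y : seq nat) i v : i < size X + size Y ->
  (nth 0 (munion X Y) i <= v) = (i < count (fun x => x <= v) (X ++ Y)).
Proof.
move=> lt_i; rewrite /munion -(count_sort leq).
rewrite (sorted_nth_count (fun x => x <= v)) //.
- by move=> x y; apply: leq_trans.
- exact: (sort_sorted leq_total).
- by rewrite size_sort size_cat.
Qed.

Lemma nth_munion_geq (X Y : seq nat) i v : i < size X + size Y ->
  (v <= nth 0 (munion X Y) i) = (count (fun x => x < v) (X ++ Y) <= i).
Proof.
move=> lt_i; rewrite /munion leqNgt -(count_sort leq).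
rewrite (sorted_nth_count (fun x => x < v)) -?leqNgt //.
- by move=> x y; apply: leq_ltn_trans.
- exact: (sort_sorted leq_total).
- by rewrite size_sort size_cat.
Qed.

Lemma is_dominant_greedy (s d : seq nat) :
  distinct_partition d -> size d = size s ->
  (forall i, i < size s -> nth 0 s i <= nth 0 d i) ->
  (forall i, i < size s ->
     nth 0 d i <= nth 0 s i \/ 0 < i /\ nth 0 d i = (nth 0 d i.-1).+1) ->
  is_dominant s d.
Proof.
move=> d_sorted size_d s_le_d greedy; split => // c c_sorted [size_c s_le_c].
split=> [|i]; first by rewrite size_c size_d.
rewrite size_d; elim: i => [|i IH] lt_i.
  by case: (greedy 0 lt_i) => [/leq_trans->|[]] //; apply: s_le_c.
case: (greedy i.+1 lt_i) => [/leq_trans->|[_ ->]] //; first exact: s_le_c.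
apply: leq_ltn_trans (IH (ltnW lt_i)) _.
by apply: (sortedP 0 c_sorted); rewrite size_c.
Qed.

Lemma is_dominant_munion (X Y d : seq nat) :
  distinct_partition d -> size d = size X + size Y ->
  (forall i, i < size d -> i < count (fun x => x <= nth 0 d i) (X ++ Y)) ->
  (forall i, i < size d -> count (fun x => x < nth 0 d i) (X ++ Y) <= i \/
                           0 < i /\ nth 0 d i = (nth 0 d i.-1).+1) ->
  is_dominant (munion X Y) d.
Proof.
move=> d_sorted size_d count_le count_lt.
have size_s : size (munion X Y) = size d by rewrite size_sort size_cat.
apply: is_dominant_greedy => // [i|i]; rewrite size_s => lt_i.
  by rewrite nth_munion_leq -?size_d //; apply: count_le.
by rewrite nth_munion_geq -?size_d //; apply: count_lt.
Qed.

Section Candidate.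

(* [p] and [l] stand for λ_(m+1) and λ_m, and [A k], [B k] for the k-th parts
   of A and B. *)
Variables (p l a b j : nat) (A B : nat -> nat).
Hypothesis A_incr : forall k, 0 < k < a -> A k < A k.+1.
Hypothesis B_incr : forall k, 0 < k < b -> B k < B k.+1.
Hypothesis B_le : forall k, 0 < k <= b -> B k <= p + k.-1.
Hypothesis B_eq : forall k, l < k <= b -> B k = p + k.-1.
Hypothesis A_ge : forall k, 0 < k <= a -> p + l <= A k.
Hypothesis A_lt : forall k, 0 < k <= j -> A k < p + b + k.-1.
Hypothesis A_ge_shift : forall k, j < k <= a -> p + b + k.-1 <= A k.
Hypothesis j_le_a : j <= a.

Let As := [seq A k | k <- iota 1 a].
Let Bs := [seq B k | k <- iota 1 b].

Definition candidate :=
  Bs ++ [seq p + b + i | i <- iota 0 j] ++ [seq A k | k <- iota j.+1 (a - j)].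

Definition candidate_part i :=
  if i < b then B i.+1 else if i < b + j then p + i else A (i - b).+1.

Lemma candidate_partB i : i < b -> candidate_part i = B i.+1.
Proof. by rewrite /candidate_part => ->. Qed.

Lemma candidate_partM i : b <= i < b + j -> candidate_part i = p + i.
Proof. by rewrite /candidate_part => /andP[/leq_gtF-> ->]. Qed.

Lemma candidate_partA i : b + j <= i -> candidate_part i = A (i - b).+1.
Proof. by move=> le_i; rewrite /candidate_part !ifF //; lia. Qed.

Lemma A_shift k k' : 0 < k <= k' -> k' <= a -> A k + (k' - k) <= A k'.
Proof. exact: leq_incr_shift A_incr. Qed.

Lemma B_shift k k' : 0 < k <= k' -> k' <= b -> B k + (k' - k) <= B k'.
Proof. exact: leq_incr_shift B_incr. Qed.

Lemma l_lt_b : 0 < j -> l < b.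
Proof. by move=> j_gt0; have := A_lt 1; have := A_ge 1; lia. Qed.

Lemma size_candidate : size candidate = b + a.
Proof. by rewrite !size_cat !size_map !size_iota; lia. Qed.

Lemma nth_candidate i : i < b + a -> nth 0 candidate i = candidate_part i.
Proof.
move=> lt_i; rewrite /candidate /candidate_part /Bs nth_cat size_map size_iota.
case: ltnP => [lt_ib | le_bi]; first by rewrite (nth_map 0) ?size_iota // nth_iota.
rewrite nth_cat size_map size_iota.
case: ltnP => [lt_ij | le_ji].
  by rewrite (nth_map 0) ?size_iota // nth_iota // ifT; lia.
rewrite (nth_map 0) ?size_iota ?nth_iota ?ifF; try lia.
by congr A; lia.
Qed.

Lemma candidate_part_incr i : i.+1 < b + a -> candidate_part i < candidate_part i.+1.
Proof.
move=> lt_i.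
have [lt_ib | le_bi] := ltnP i.+1 b.
  by rewrite !candidate_partB ?B_incr //; lia.
have [lt_ib | {}le_bi] := ltnP i b.
  rewrite candidate_partB //; have -> : i.+1 = b by lia.
  have := B_le b.
  have [lt_bj | le_jb] := ltnP b (b + j).
    by rewrite candidate_partM; lia.
  by rewrite candidate_partA // subnn; have := A_ge_shift 1; lia.
have [lt_ij | le_ji] := ltnP i.+1 (b + j).
  by rewrite !candidate_partM; lia.
have [lt_ij | {}le_ji] := ltnP i (b + j).
  by rewrite candidate_partM ?candidate_partA //; have := A_ge_shift (i.+1 - b).+1; lia.
by rewrite !candidate_partA ?subSn ?A_incr //; lia.
Qed.

Lemma count_le_candidate_part i :
  i < b + a -> i < count (fun x => x <= candidate_part i) (As ++ Bs).
Proof.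
move=> lt_i; rewrite count_cat.
have [lt_ib | le_bi] := ltnP i b.
  rewrite candidate_partB // addnC ltn_addr //.
  by apply: count_map_iota_lb => // k k_le; have := B_shift k i.+1; lia.
have [lt_ij | le_ji] := ltnP i (b + j).
  rewrite candidate_partM ?le_bi //.
  have count_A : (i - b).+1 <= count (fun x => x <= p + i) As.
    by apply: count_map_iota_lb => [|k k_le]; [lia | have := A_lt k; lia].
  have count_B : b <= count (fun x => x <= p + i) Bs.
    by apply: count_map_iota_lb => // k k_le; have := B_le k; lia.
  lia.
rewrite candidate_partA //.
have count_A : (i - b).+1 <= count (fun x => x <= A (i - b).+1) As.
  by apply: count_map_iota_lb => [|k k_le]; [lia | have := A_shift k (i - b).+1; lia].
have count_B : b <= count (fun x => x <= A (i - b).+1) Bs.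
  apply: count_map_iota_lb => // k k_le.
  by have := B_le k; have := A_ge_shift (i - b).+1; lia.
lia.
Qed.

Lemma candidate_part_greedy i : i < b + a ->
  count (fun x => x < candidate_part i) (As ++ Bs) <= i \/
  0 < i /\ candidate_part i = (candidate_part i.-1).+1.
Proof.
move=> lt_i; rewrite count_cat.
have [lt_ib | le_bi] := ltnP i b.
  rewrite !candidate_partB; try lia.
  have [le_il | lt_li] := leqP i l.
    left.
    have count_A : count (fun x => x < B i.+1) As <= 0.
      apply: count_map_iota_ub => k k_le.
      by have := A_ge k; have := B_le i.+1; lia.
    have count_B : count (fun x => x < B i.+1) Bs <= i.
      by apply: count_map_iota_ub => k k_le; have := B_shift i.+1 k; lia.
    lia.
  by right; rewrite prednK ?B_eq; lia.
have [lt_ij | le_ji] := ltnP i (b + j).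
  have lt_lb : l < b by apply: l_lt_b; lia.
  right; rewrite candidate_partM ?le_bi //.
  have [lt_bi | le_ib] := ltnP b i; first by rewrite candidate_partM; lia.
  have eq_ib : i = b by lia.
  by rewrite eq_ib candidate_partB ?prednK ?B_eq; lia.
left; rewrite candidate_partA //.
have count_A : count (fun x => x < A (i - b).+1) As <= i - b.
  by apply: count_map_iota_ub => k k_le; have := A_shift (i - b).+1 k; lia.
have := count_size (fun x => x < A (i - b).+1) Bs; rewrite size_map size_iota.
lia.
Qed.

Lemma candidate_is_dominant : is_dominant (munion As Bs) candidate.
Proof.
have size_c := size_candidate; apply: is_dominant_munion.
- apply/(sortedP 0) => i; rewrite size_c => lt_i.
  by rewrite !nth_candidate /= ?candidate_part_incr //; lia.
- by rewrite size_c !size_map !size_iota addnC.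
- by move=> i; rewrite size_c => lt_i; rewrite nth_candidate // count_le_candidate_part.
move=> i; rewrite size_c => lt_i.
rewrite !nth_candidate ?(leq_ltn_trans (leq_pred i) lt_i) //.
exact: candidate_part_greedy.
Qed.

End Candidate.

Lemma weight_antitone m n lam i k : polynomial_weight m n lam ->
  0 < i <= k -> k <= m -> lam k <= lam i.
Proof.
case=> lam_decr _ _ le_ik le_km.
apply: (@homo_leq_in nat [pred x | 0 < x <= m] lam (fun x y => y <= x));
  rewrite ?inE //; try lia.
- by move=> x y x_in y_in z; rewrite !inE in x_in y_in *; lia.
- by move=> x x_in; rewrite !inE in x_in * => x1_in; apply: lam_decr; lia.
Qed.

Lemma is_dominant_seqA_seqB m n lam a b j :
  polynomial_weight m n lam -> a <= m -> b <= n -> j <= a ->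
  (0 < j -> lam (m - j + 1) < b) -> (j < a -> b <= lam (m - j)) ->
  is_dominant (munion (seqA m lam a) (seqB m lam b))
    (seqB m lam b ++ [seq lam (m + 1) + b + i | i <- iota 0 j]
       ++ [seq lam (m - k + 1) + lam (m + 1) + (k - 1) | k <- iota j.+1 (a - j)]).
Proof.
move=> w le_am le_bn le_ja lam_lt lam_ge.
have [_ lam_decr lam_zero] := w.
have anti i k := @weight_antitone m n lam i k w.
apply: (@candidate_is_dominant (lam (m + 1)) (lam m) a b j
          (fun k => lam (m - k + 1) + lam (m + 1) + (k - 1))
          (fun k => lam (m + 1) - lam (m + k) + (k - 1))) => // k k_in /=.
- have -> : m - k.+1 + 1 = m - k by lia.
  by have := anti (m - k) (m - k + 1); lia.
- by have := lam_decr (m + k); rewrite -addnS; lia.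
- lia.
- by rewrite (lam_zero k); lia.
- by have := anti (m - k + 1) m; lia.
- by have := anti (m - j + 1) (m - k + 1); lia.
- by have := anti (m - k + 1) (m - j); lia.
Qed.

Theorem lemma6p3 (m n : nat) (lam : nat -> nat) (a b : nat) :
  0 < m -> 0 < n -> polynomial_weight m n lam -> a <= m -> b <= n ->
  [/\ (b <= lam m ->
        is_dominant (munion (seqA m lam a) (seqB m lam b))
                    (seqB m lam b ++ seqA m lam a)),
      (forall j, 1 <= j <= a - 1 -> lam (m - j + 1) < b <= lam (m - j) ->
        is_dominant (munion (seqA m lam a) (seqB m lam b))
          (seqB m lam b
           ++ [seq lam (m + 1) + b + i | i <- iota 0 j]
           ++ [seq lam (m - k + 1) + lam (m + 1) + (k - 1) | k <- iota j.+1 (a - j)])) &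
      (lam (m - a + 1) < b ->
        is_dominant (munion (seqA m lam a) (seqB m lam b))
          (seqB m lam b ++ [seq lam (m + 1) + b + i | i <- iota 0 a]))].
Proof.
move=> _ _ w le_am le_bn; split.
- move=> le_b_lam.
  have := @is_dominant_seqA_seqB m n lam a b 0 w le_am le_bn (leq0n a).
  by rewrite !subn0 /=; apply.
- move=> j /andP[j_gt0 lt_ja] /andP[lam_lt le_b_lam].
  by apply: (@is_dominant_seqA_seqB m n) => //; lia.
- move=> lam_lt.
  have := @is_dominant_seqA_seqB m n lam a b a w le_am le_bn (leqnn a).
  by rewrite subnn cats0; apply; rewrite // ltnn.
Qed.
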